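(* Let $I$ be an interval with $1\in I\subset\,]0,\infty[$. Let $\lambda,\mu,\tilde\mu\in C^1(I\times\mathbb{R})$ be $1$-periodic in $r$ with $\dot\lambda\in C^1(I\times\mathbb{R})$, and let $\psi\in C^1(\mathbb{R})$, $\overset{\circ}{\phi}\in C^2(\mathbb{R})$ be $1$-periodic; write $\overset{\circ}{\lambda}=\lambda(1,\cdot)$, $\overset{\circ}{\mu}=\mu(1,\cdot)$. Define $D^{\pm}=e^{-\mu}\partial_t\pm e^{-\lambda}\partial_r$ and $$\tilde a=\Big(-\dot\lambda-\frac1t\Big)e^{-\mu}-\tilde\mu e^{-\lambda},\quad b=-\frac{e^{-\mu}}{t},\quad \tilde c=\Big(-\dot\lambda-\frac1t\Big)e^{-\mu}+\tilde\mu e^{-\lambda},$$ $$b_1=\Big(-2\dot\lambda-\frac1t\Big)e^{-\mu}-(\tilde\mu+\mu')e^{-\lambda},\quad b_2=-\frac{e^{-\mu}}{t},\quad b_3=-\dot\lambda'e^{-\mu-\lambda}+(\lambda'\tilde\mu-\tilde\mu\mu'-\tilde\mu')e^{-2\lambda},$$ $$b_4=\Big(-2\dot\lambda-\frac1t\Big)e^{-\mu}+(\tilde\mu+\mu')e^{-\lambda},\quad b_5=-\dot\lambda'e^{-\mu-\lambda}-(\lambda'\tilde\mu-\tilde\mu\mu'-\tilde\mu')e^{-2\lambda}.$$ Let $X,Y\in C^1(I\times\mathbb{R})$ be $1$-periodic in $r$ and solve $D^+X=\tilde aX+bY$, $D^-Y=bX+\tilde cY$ with $X(1,r)=e^{-\overset{\circ}{\mu}(r)}\psi(r)-e^{-\overset{\circ}{\lambda}(r)}\overset{\circ}{\phi}'(r)$,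 $Y(1,r)=e^{-\overset{\circ}{\mu}(r)}\psi(r)+e^{-\overset{\circ}{\lambda}(r)}\overset{\circ}{\phi}'(r)$. Let $X_1,Y_1\in C^1(I\times\mathbb{R})$ be $1$-periodic in $r$ and solve $$D^+X_1=b_1X_1+b_2Y_1+b_3X,\qquad D^-Y_1=b_2X_1+b_4Y_1+b_5Y$$ with $X_1(1,\cdot)=e^{-\lambda(1,\cdot)}\partial_rX(1,\cdot)$ and $Y_1(1,\cdot)=e^{-\lambda(1,\cdot)}\partial_rY(1,\cdot)$. Set $K(t)=\sup_{r}(X^2+Y^2)^{1/2}(t,r)$ and $$A_0=2\sup_{r\in\mathbb{R}}\Big[(|\psi'|+|\overset{\circ}{\mu}'||\psi|)e^{-\overset{\circ}{\mu}-\overset{\circ}{\lambda}}+(|\overset{\circ}{\phi}''|+|\overset{\circ}{\lambda}'||\overset{\circ}{\phi}'|)e^{-2\overset{\circ}{\lambda}}\Big](r),\qquad A(t)=\sup_{r\in\mathbb{R}}\big(X_1^2+Y_1^2\big)^{1/2}(t,r),$$ $$v(t)=\sup_{r}\Big(\frac2t+2|\dot\lambda|+(|\tilde\mu|+|\mu'|)e^{\mu-\lambda}\Big)(t,r),\quad h(t)=\sup_r\Big[|\dot\lambda'|e^{-\lambda}+(|\mu'||\tilde\mu|+|\lambda'||\tilde\mu|+|\tilde\mu'|)e^{\mu-2\lambda}\Big](t,r).$$ Then for $t\in I$ with $t\le 1$, $$A(t)\le A_0+3\int_t^1\big(v(s)A(s)+h(s)K(s)\big)\,ds,$$ and for $t\in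 I$ with $t\ge1$ the same estimate holds with $\int_t^1$ replaced by $\int_1^t$.
   Context: A dot denotes $\partial_t$ and a prime denotes $\partial_r$. All functions of $(t,r)$ are periodic in $r$ with period 1. *)

From Stdlib Require Import Reals.
From Coquelicot Require Import Coquelicot.
Open Scope R_scope.

Definition is_interval (I : R -> Prop) : Prop :=
  forall a b c, I a -> I c -> a <= b -> b <= c -> I b.

Definition periodic2 (f : R -> R -> R) : Prop := forall t r, f t (r + 1) = f t r.
Definition periodic1 (f : R -> R) : Prop := forall r, f (r + 1) = f r.

Definition cont_on (I : R -> Prop) (g : R -> R -> R) : Prop :=
  forall t r, I t -> forall eps, 0 < eps -> exists delta, 0 < delta /\
    forall s q, I s -> Rabs (s - t) < delta -> Rabs (q - r) < delta ->
      Rabs (g s q - g t r) < eps.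

Definition pderiv_t (I : R -> Prop) (f ft : R -> R -> R) : Prop :=
  forall t r, I t -> forall eps, 0 < eps -> exists delta, 0 < delta /\
    forall s, I s -> s <> t -> Rabs (s - t) < delta ->
      Rabs ((f s r - f t r) / (s - t) - ft t r) < eps.

Definition pderiv_r (I : R -> Prop) (f fr : R -> R -> R) : Prop :=
  forall t r, I t -> derivable_pt_lim (fun q => f t q) r (fr t r).

(* f in C^1(I x R), with partial derivatives ft (= f dot) and fr (= f prime):
   f, ft, fr continuous on I x R and ft, fr are the partial derivatives. *)
Definition C1_on (I : R -> Prop) (f ft fr : R -> R -> R) : Prop :=
  cont_on I f /\ cont_on I ft /\ cont_on I fr /\ pderiv_t I f ft /\ pderiv_r I f fr.

Definition supR (g : R -> R) : R := real (Lub_Rbar (fun x => exists r, x = g r)).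

From Stdlib Require Import Reals Lra Classical ClassicalEpsilon.
From Coquelicot Require Import Coquelicot.
Open Scope R_scope.

(* Let r be a point where |X1(s, .)| is maximal; it exists by periodicity in r. There
   X1' = 0, so the equation of X1 expresses its time derivative through X1, Y1 and X, with
   coefficients bounded by v(s) and h(s): |dX1/dt| <= v (|X1| + |Y1|) + h |X|
   <= (3 / sqrt 2) (v A + h K), and likewise for Y1. Such a bound at maximum points gives
   sup |X1(t, .)| <= sup |X1(1, .)| + (3 / sqrt 2) |int_1^t (v A + h K)|: for every eps > 0
   the barrier sup |X1(1, .)| + eps (1 + |s - 1|) + |int_1^s ...| is never reached, because
   at a first contact the one-sided derivative of |X1| at the maximum point, which is at
   most the integrand, would have to be at least the slope of the barrier. Computing X' at
   t = 1 from the data gives sup |X1(1, .)| <= A0 / 2, and A <= sqrt 2 max (sup |X1|, sup |Y1|)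
   concludes. *)

Lemma continuity_pt_eps f x : continuity_pt f x ->
  forall eps, 0 < eps -> exists d, 0 < d /\
    forall y, Rabs (y - x) < d -> Rabs (f y - f x) < eps.
Proof.
  intros Hf eps Heps.
  apply continuity_pt_filterlim in Hf.
  destruct (proj1 (filterlim_locally f (f x)) Hf (mkposreal eps Heps)) as [d Hd].
  exists d. split; [apply cond_pos | intros y Hy; apply (Hd y Hy)].
Qed.

Lemma cont_on_comp2 I (f : R -> R -> R) g1 g2 :
  (forall x y, filterlim (fun z => f (fst z) (snd z))
                 (filter_prod (locally x) (locally y)) (locally (f x y))) ->
  cont_on I g1 -> cont_on I g2 -> cont_on I (fun t r => f (g1 t r) (g2 t r)).
Proof.
  intros Hf H1 H2 t r It eps Heps.
  destruct (Hf (g1 t r) (g2 t r) _ (locally_ball _ (mkposreal eps Heps)))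
    as [Q1 Q2 [d1 HQ1] [d2 HQ2] HQ].
  destruct (H1 t r It d1 (cond_pos d1)) as [e1 [He1 Ht1]].
  destruct (H2 t r It d2 (cond_pos d2)) as [e2 [He2 Ht2]].
  exists (Rmin e1 e2). split; [now apply Rmin_glb_lt |].
  intros s q Is Hs Hq.
  apply (HQ (g1 s q) (g2 s q)); [apply HQ1, Ht1 | apply HQ2, Ht2]; auto;
    eapply Rlt_le_trans; eauto; [apply Rmin_l | apply Rmin_l | apply Rmin_r | apply Rmin_r].
Qed.

Lemma cont_on_plus I g1 g2 :
  cont_on I g1 -> cont_on I g2 -> cont_on I (fun t r => g1 t r + g2 t r).
Proof. apply cont_on_comp2. intros x y. exact (@filterlim_plus _ R_NormedModule x y). Qed.

Lemma cont_on_mult I g1 g2 :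
  cont_on I g1 -> cont_on I g2 -> cont_on I (fun t r => g1 t r * g2 t r).
Proof. apply cont_on_comp2. intros x y. exact (@filterlim_mult R_AbsRing x y). Qed.

Lemma cont_on_comp I f g :
  continuity f -> cont_on I g -> cont_on I (fun t r => f (g t r)).
Proof.
  intros Hf Hg. apply (cont_on_comp2 I (fun x _ => f x) g g); auto. intros x y.
  eapply filterlim_comp; [apply filterlim_fst | apply continuity_pt_filterlim, Hf].
Qed.

Lemma cont_on_const I c : cont_on I (fun _ _ => c).
Proof.
  intros t r _ eps Heps. exists 1. split; [lra |].
  intros. unfold Rminus. rewrite Rplus_opp_r, Rabs_R0. exact Heps.
Qed.

Lemma cont_on_time I f :
  (forall t, I t -> continuity_pt f t) -> cont_on I (fun t _ => f t).
Proof.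
  intros Hf t r It eps Heps.
  destruct (continuity_pt_eps f t (Hf t It) eps Heps) as [d [Hd Hfd]].
  exists d. split; auto.
Qed.

Lemma cont_on_space I f : continuity f -> cont_on I (fun _ r => f r).
Proof.
  intros Hf t r _ eps Heps.
  destruct (continuity_pt_eps f r (Hf r) eps Heps) as [d [Hd Hfd]].
  exists d. split; auto.
Qed.

Lemma cont_on_at_time I J g t0 : cont_on I g -> I t0 -> cont_on J (fun _ r => g t0 r).
Proof.
  intros Hg It0 t r _ eps Heps.
  destruct (Hg t0 r It0 eps Heps) as [d [Hd Hgd]].
  exists d. split; auto. intros s q _ _ Hq. apply Hgd; auto.
  unfold Rminus. rewrite Rplus_opp_r, Rabs_R0. exact Hd.
Qed.

Lemma cont_on_inv_time I c : (forall t, I t -> 0 < t) -> cont_on I (fun t _ => c / t).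
Proof.
  intros Ipos. apply cont_on_time. intros t It.
  apply continuity_pt_div; [apply continuity_pt_const; now intros ? ? |
    apply continuity_pt_id | specialize (Ipos t It); lra].
Qed.

Lemma continuity_sqrt : continuity sqrt.
Proof. intro x. apply continuity_pt_filterlim, continuous_sqrt. Qed.

Ltac solve_cont_on :=
  repeat first
    [ assumption
    | (apply cont_on_inv_time; assumption)
    | apply cont_on_plus | apply cont_on_mult | apply cont_on_const
    | (apply cont_on_space; assumption)
    | (eapply cont_on_at_time; [eassumption | assumption])
    | apply (cont_on_comp _ _ _ (derivable_continuous _ (derivable_opp _ derivable_id)))
    | apply (cont_on_comp _ _ _ Rcontinuity_abs)
    | apply (cont_on_comp _ _ _ (derivable_continuous _ derivable_exp))
    | apply (cont_on_comp _ _ _ (derivable_continuous _ (derivable_pow 2)))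
    | apply (cont_on_comp _ _ _ continuity_sqrt) ].

Definition periodic_on (I : R -> Prop) (g : R -> R -> R) : Prop :=
  forall t r, I t -> g t (r + 1) = g t r.

Definition no_isolated_points (I : R -> Prop) : Prop :=
  forall t, I t -> forall d, 0 < d -> exists s, I s /\ s <> t /\ Rabs (s - t) < d.

Lemma periodic2_on I g : periodic2 g -> periodic_on I g.
Proof. intros Hg t r _. apply Hg. Qed.

Lemma periodic_on_IZR I g t : periodic_on I g -> I t ->
  forall z r, g t (r + IZR z) = g t r.
Proof.
  intros Hg It z. induction z as [| z Hz | z Hz] using Z.peano_ind.
  - intros r. now rewrite Rplus_0_r.
  - intros r. rewrite succ_IZR, <- Rplus_assoc, Hg; auto.
  - intros r. rewrite <- (Hz r), <- (Hg t (r + IZR (Z.pred z)) It).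
    f_equal. rewrite <- Z.sub_1_r, minus_IZR. ring.
Qed.

Lemma periodic_on_reduce I g r : periodic_on I g ->
  exists r0, 0 <= r0 <= 1 /\ forall t, I t -> g t r = g t r0.
Proof.
  intros Hg. destruct (base_Int_part r) as [H1 H2].
  exists (r - IZR (Int_part r)). split; [lra |]. intros t It.
  replace r with (r - IZR (Int_part r) + IZR (Int_part r)) at 1 by ring.
  now apply (periodic_on_IZR I).
Qed.

Lemma derivable_pt_lim_periodic f r l l' : (forall q, f (q + 1) = f q) ->
  derivable_pt_lim f r l -> derivable_pt_lim f (r + 1) l' -> l' = l.
Proof.
  intros Hf Hl Hl'. apply (uniqueness_limite f r); auto.
  intros eps Heps. destruct (Hl' eps Heps) as [d Hd]. exists d. intros h Hh Hhd.
  specialize (Hd h Hh Hhd). replace (r + 1 + h) with (r + h + 1) in Hd by ring.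
  now rewrite !Hf in Hd.
Qed.

Lemma deriv_periodic1 f f' :
  periodic1 f -> (forall r, derivable_pt_lim f r (f' r)) -> periodic1 f'.
Proof. intros Hf Hd r. exact (derivable_pt_lim_periodic f r _ _ Hf (Hd r) (Hd (r + 1))). Qed.

Lemma pderiv_r_periodic I f fr : periodic_on I f -> pderiv_r I f fr -> periodic_on I fr.
Proof.
  intros Hf Hd t r It.
  exact (derivable_pt_lim_periodic (f t) r _ _ (fun q => Hf t q It) (Hd t r It) (Hd t (r + 1) It)).
Qed.

Lemma pderiv_t_periodic I f ft : no_isolated_points I ->
  periodic_on I f -> pderiv_t I f ft -> periodic_on I ft.
Proof.
  intros HI Hf Hd t r It. apply NNPP. intros Hne.
  set (e := Rabs (ft t (r + 1) - ft t r) / 2).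
  assert (He : 0 < e).
  { assert (0 < Rabs (ft t (r + 1) - ft t r)) by (apply Rabs_pos_lt; lra). unfold e. lra. }
  destruct (Hd t (r + 1) It e He) as [d1 [Hd1 Hq1]].
  destruct (Hd t r It e He) as [d2 [Hd2 Hq2]].
  destruct (HI t It (Rmin d1 d2) (Rmin_glb_lt _ _ _ Hd1 Hd2)) as [s [Is [Hst Hs]]].
  specialize (Hq1 s Is Hst (Rlt_le_trans _ _ _ Hs (Rmin_l _ _))).
  specialize (Hq2 s Is Hst (Rlt_le_trans _ _ _ Hs (Rmin_r _ _))).
  rewrite !Hf in Hq1 by auto.
  assert (Rabs (ft t (r + 1) - ft t r) < 2 * e).
  { replace (ft t (r + 1) - ft t r) with
      (- ((f s r - f t r) / (s - t) - ft t (r + 1)) + ((f s r - f t r) / (s - t) - ft t r))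
      by ring.
    eapply Rle_lt_trans; [apply Rabs_triang |]. rewrite Rabs_Ropp. lra. }
  unfold e in *. lra.
Qed.

Lemma is_interval_no_isolated_points I a b :
  is_interval I -> I a -> I b -> a <> b -> no_isolated_points I.
Proof.
  intros HI Ia Ib Hab t It d Hd.
  set (lo := Rmin a b). set (hi := Rmax a b).
  assert (Hlh : lo < hi) by (unfold lo, hi, Rmin, Rmax; destruct Rle_dec; lra).
  assert (Ilo : I lo) by (unfold lo, Rmin; destruct Rle_dec; auto).
  assert (Ihi : I hi) by (unfold hi, Rmax; destruct Rle_dec; auto).
  set (k := Rmin (d / 2) ((hi - lo) / 2)).
  assert (Hk : 0 < k) by (apply Rmin_glb_lt; lra).
  assert (Hkd : k <= d / 2) by apply Rmin_l.
  assert (Hkh : k <= (hi - lo) / 2) by apply Rmin_r.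
  destruct (Rle_dec t ((lo + hi) / 2)).
  - exists (t + k). repeat split; [| lra | rewrite Rabs_pos_eq; lra].
    apply (HI t _ hi); auto; lra.
  - exists (t - k). repeat split; [| lra | rewrite Rabs_left; lra].
    apply (HI lo _ t); auto; lra.
Qed.

Lemma supR_spec f M : (forall r, f r <= M) ->
  (forall r, f r <= supR f) /\ supR f <= M.
Proof.
  intros HM. unfold supR.
  destruct (Lub_Rbar_correct (fun x => exists r, x = f r)) as [Hub Hlub].
  assert (Hle : Rbar_le (Lub_Rbar (fun x => exists r, x = f r)) M)
    by (apply Hlub; intros x [r ->]; exact (HM r)).
  assert (Hge : forall r, Rbar_le (f r) (Lub_Rbar (fun x => exists r, x = f r)))
    by (intros r; apply Hub; now exists r).
  specialize (Hge 0) as Hge0.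
  destruct (Lub_Rbar (fun x => exists r, x = f r)); simpl in *; try contradiction.
  split; auto.
Qed.

Lemma supR_ub f M r : (forall r, f r <= M) -> f r <= supR f.
Proof. intros HM. now apply supR_spec with M. Qed.

Lemma supR_lub f M : (forall r, f r <= M) -> supR f <= M.
Proof. intros HM. now apply supR_spec. Qed.

(* Also true when [f] is unbounded, where [supR f] is the junk value [0]. *)
Lemma supR_nonneg f : (forall r, 0 <= f r) -> 0 <= supR f.
Proof.
  intros Hf. unfold supR.
  destruct (Lub_Rbar_correct (fun x => exists r, x = f r)) as [Hub _].
  specialize (Hub (f 0) (ex_intro _ 0 eq_refl)).
  destruct (Lub_Rbar (fun x => exists r, x = f r)); simpl in *;
    [specialize (Hf 0); lra | lra | contradiction].
Qed.

Lemma cont_on_continuity_pt I g s r : cont_on I g -> I s -> continuity_pt (g s) r.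
Proof.
  intros Hg Is eps Heps. destruct (Hg s r Is eps Heps) as [d [Hd Hgd]].
  exists d. split; auto. intros q [_ Hq]. apply Hgd; auto.
  unfold Rminus. rewrite Rplus_opp_r, Rabs_R0. exact Hd.
Qed.

Section PeriodicSup.

Variables (I : R -> Prop) (g : R -> R -> R).
Hypotheses (Cg : cont_on I g) (Pg : periodic_on I g).

Lemma supR_attained s : I s -> exists r0, supR (g s) = g s r0 /\ forall r, g s r <= g s r0.
Proof.
  intros Is.
  destruct (continuity_ab_maj (g s) 0 1) as [r0 [Hr0 _]];
    [lra | intros c _; now apply (cont_on_continuity_pt I) |].
  assert (Hmax : forall r, g s r <= g s r0).
  { intros r. destruct (periodic_on_reduce I g r Pg) as [q [Hq ->]]; auto. }
  exists r0. split; auto.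
  apply Rle_antisym; [now apply supR_lub | now apply supR_ub with (g s r0)].
Qed.

Lemma le_supR s r : I s -> g s r <= supR (g s).
Proof. intros Is. destruct (supR_attained s Is) as [r0 [-> Hr0]]. apply Hr0. Qed.

Lemma cont_on_uniform s eps : I s -> 0 < eps -> exists d, 0 < d /\
  forall s', I s' -> Rabs (s' - s) < d -> forall r, Rabs (g s' r - g s r) < eps.
Proof.
  intros Is Heps.
  assert (Hx : forall x, {d : posreal | forall s' q, I s' -> Rabs (s' - s) < d ->
                  Rabs (q - x) < d -> Rabs (g s' q - g s x) < eps / 2}).
  { intros x.
    destruct (constructive_indefinite_description _ (Cg s x Is (eps / 2) ltac:(lra)))
      as [d [Hd Hgd]].
    now exists (mkposreal d Hd). }
  destruct (compactness_value_1d 0 1 (fun x => proj1_sig (Hx x))) as [d Hd].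
  exists d. split; [apply cond_pos |]. intros s' Is' Hs' r.
  destruct (periodic_on_reduce I g r Pg) as [r0 [Hr0 Er]].
  rewrite !Er by auto.
  apply NNPP. intros Hn. apply (Hd r0 Hr0). intros [x [Hx0 [Hrx Hdx]]]. apply Hn.
  assert (A1 : Rabs (g s' r0 - g s x) < eps / 2)
    by (apply (proj2_sig (Hx x)); auto; lra).
  assert (A2 : Rabs (g s r0 - g s x) < eps / 2).
  { apply (proj2_sig (Hx x)); auto.
    unfold Rminus. rewrite Rplus_opp_r, Rabs_R0. apply cond_pos. }
  replace (g s' r0 - g s r0) with ((g s' r0 - g s x) - (g s r0 - g s x)) by ring.
  eapply Rle_lt_trans; [apply Rabs_triang |]. rewrite Rabs_Ropp. lra.
Qed.

Lemma cont_on_supR : cont_on I (fun s _ => supR (g s)).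
Proof.
  intros s r Is eps Heps.
  destruct (cont_on_uniform s (eps / 2) Is ltac:(lra)) as [d [Hd Hgd]].
  exists d. split; auto. intros s' q Is' Hs' _.
  destruct (supR_attained s Is) as [r0 [-> H0]].
  destruct (supR_attained s' Is') as [r1 [-> H1]].
  specialize (H0 r1). specialize (H1 r0).
  assert (A0 := Hgd s' Is' Hs' r0). assert (A1 := Hgd s' Is' Hs' r1).
  apply Rabs_def2 in A0. apply Rabs_def2 in A1. apply Rabs_def1; lra.
Qed.

End PeriodicSup.

Definition clamp lo hi s := Rmax lo (Rmin hi s).

Lemma clamp_in lo hi s : lo <= hi -> lo <= clamp lo hi s <= hi.
Proof. intros. unfold clamp, Rmax, Rmin. repeat destruct Rle_dec; lra. Qed.

Lemma clamp_id lo hi s : lo <= s <= hi -> clamp lo hi s = s.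
Proof. intros. unfold clamp, Rmax, Rmin. repeat destruct Rle_dec; lra. Qed.

Lemma clamp_lipschitz lo hi x y : lo <= hi ->
  Rabs (clamp lo hi y - clamp lo hi x) <= Rabs (y - x).
Proof.
  intros. unfold clamp, Rmax, Rmin.
  repeat destruct Rle_dec; unfold Rabs; repeat destruct Rcase_abs; lra.
Qed.

Lemma continuity_clamp_comp I f lo hi : lo <= hi -> (forall s, lo <= s <= hi -> I s) ->
  cont_on I (fun t _ => f t) -> continuity (fun s => f (clamp lo hi s)).
Proof.
  intros Hlh HI Hf x eps Heps.
  assert (Hx := clamp_in lo hi x Hlh).
  destruct (Hf (clamp lo hi x) 0 (HI _ Hx) eps Heps) as [d [Hd Hfd]].
  exists d. split; auto. intros y [_ Hy]. apply (Hfd _ 0).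
  - apply HI, clamp_in, Hlh.
  - eapply Rle_lt_trans; [apply clamp_lipschitz; auto | exact Hy].
  - unfold Rminus. rewrite Rplus_opp_r, Rabs_R0. exact Hd.
Qed.

Lemma ex_RInt_continuity f a b : continuity f -> ex_RInt f a b.
Proof.
  intros Hf. apply (@ex_RInt_continuous R_CompleteNormedModule).
  intros z _. apply continuity_pt_filterlim, Hf.
Qed.

Lemma ex_RInt_cont_on I f a b : a <= b -> (forall s, a <= s <= b -> I s) ->
  cont_on I (fun t _ => f t) -> ex_RInt f a b.
Proof.
  intros Hab HI Hf.
  apply (ex_RInt_ext (fun s => f (clamp a b s))).
  - intros x Hx. rewrite Rmin_left, Rmax_right in Hx by lra. rewrite clamp_id; auto; lra.
  - apply ex_RInt_continuity. now apply (continuity_clamp_comp I).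
Qed.

Lemma derivable_pt_lim_RInt f a c : continuity f ->
  derivable_pt_lim (fun y => RInt f a y) c (f c).
Proof.
  intros Hf. apply is_derive_Reals, (is_derive_RInt f _ a).
  - apply filter_forall. intros y.
    now apply (@RInt_correct R_CompleteNormedModule), ex_RInt_continuity.
  - apply continuity_pt_filterlim, Hf.
Qed.

Lemma derivable_pt_lim_abs_max f x l : derivable_pt_lim f x l ->
  (forall y, Rabs (f y) <= Rabs (f x)) -> f x <> 0 -> l = 0.
Proof.
  intros Hd Hmax Hx.
  assert (Hsq := derivable_pt_lim_mult f f x l l Hd Hd).
  assert (Hcrit : derive_pt (f * f)%F x (exist _ _ Hsq) = 0).
  { apply (deriv_maximum _ (x - 1) (x + 1)); try lra. intros y _ _.
    change (Rsqr (f y) <= Rsqr (f x)). rewrite (Rsqr_abs (f y)), (Rsqr_abs (f x)).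
    apply Rsqr_incr_1; auto using Rabs_pos. }
  simpl in Hcrit.
  destruct (Rmult_integral l (2 * f x)) as [Hl | Hl]; [lra | exact Hl | lra].
Qed.

Lemma first_crossing (phi : R -> R) a b : a <= b -> phi a < 0 -> 0 <= phi b ->
  (forall s, a <= s <= b -> forall e, 0 < e -> exists d, 0 < d /\
     forall y, a <= y <= b -> Rabs (y - s) < d -> Rabs (phi y - phi s) < e) ->
  exists c, a < c <= b /\ 0 <= phi c /\ forall y, a <= y < c -> phi y < 0.
Proof.
  intros Hab Ha Hb Hphi.
  set (E x := a <= x <= b /\ forall y, a <= y <= x -> phi y < 0).
  assert (Ea : E a) by (split; [lra | intros y Hy; now replace y with a by lra]).
  destruct (completeness E) as [c [Hub Hlub]];
    [exists b; intros x [Hx _]; lra | now exists a |].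
  assert (Hac : a <= c) by now apply Hub.
  assert (Hcb : c <= b) by (apply Hlub; intros x [Hx _]; lra).
  assert (Hbelow : forall y, a <= y < c -> phi y < 0).
  { intros y Hy. apply Rnot_le_lt. intros Hy0.
    assert (c <= y); [| lra]. apply Hlub. intros x [Hx Hx'].
    apply Rnot_lt_le. intros Hxy. specialize (Hx' y). lra. }
  assert (Hc : 0 <= phi c).
  { apply Rnot_lt_le. intros Hc.
    assert (Hcb' : c < b) by (destruct (Req_dec c b) as [-> | ]; lra).
    destruct (Hphi c (conj Hac Hcb) (- phi c) ltac:(lra)) as [d [Hd Hphid]].
    set (x := Rmin (c + d / 2) b).
    assert (Hx1 : x <= c + d / 2) by apply Rmin_l.
    assert (Hx2 : x <= b) by apply Rmin_r.
    assert (Hx3 : c < x) by (apply Rmin_glb_lt; lra).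
    assert (Ex : E x).
    { split; [lra |]. intros y Hy. destruct (Rlt_le_dec y c); [apply Hbelow; lra |].
      assert (Hy' := Hphid y ltac:(lra) ltac:(rewrite Rabs_pos_eq; lra)).
      apply Rabs_def2 in Hy'. lra. }
    assert (x <= c) by now apply Hub. lra. }
  exists c. repeat split; auto.
  destruct (Req_dec a c) as [<- | ]; lra.
Qed.

Lemma left_limit_of_pos_nonneg (q : R -> R) l a c : a < c ->
  (forall y, a <= y < c -> 0 < q y) ->
  (forall e, 0 < e -> exists d, 0 < d /\
     forall y, a <= y < c -> c - y < d -> Rabs (q y - l) < e) ->
  0 <= l.
Proof.
  intros Hac Hq Hlim. apply Rnot_lt_le. intros Hl.
  destruct (Hlim (- l) ltac:(lra)) as [d [Hd Hqd]].
  set (y := Rmax a (c - d / 2)).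
  assert (Hy1 : a <= y) by apply Rmax_l.
  assert (Hy2 : c - d / 2 <= y) by apply Rmax_r.
  assert (Hy3 : y < c) by (apply Rmax_lub_lt; lra).
  specialize (Hqd y ltac:(lra) ltac:(lra)). specialize (Hq y ltac:(lra)).
  apply Rabs_def2 in Hqd. lra.
Qed.

Lemma sign_witness x : exists sg, Rabs sg = 1 /\ sg * x = Rabs x /\ forall y, sg * y <= Rabs y.
Proof.
  destruct (Rle_dec 0 x).
  - exists 1. rewrite Rabs_R1, Rabs_pos_eq by lra. repeat split; [ring |].
    intros y. rewrite Rmult_1_l. apply RRle_abs.
  - exists (-1). rewrite Rabs_left, (Rabs_left x) by lra. repeat split; [lra | ring |].
    intros y. rewrite <- Rabs_Ropp. replace (-1 * y) with (- y) by ring. apply RRle_abs.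
Qed.

Section Comparison.

Variables (I : R -> Prop) (u ut ur : R -> R -> R) (G : R -> R) (m a b : R).
Hypotheses (Hab : a <= b) (Hsub : forall s, a <= s <= b -> I s)
  (Cu : cont_on I u) (Pu : periodic_on I u)
  (Dut : pderiv_t I u ut) (Dur : pderiv_r I u ur)
  (CG : cont_on I (fun s _ => G s)) (G_nonneg : forall s, I s -> 0 <= G s)
  (ut_le_G : forall s r, a <= s <= b -> ur s r = 0 -> Rabs (ut s r) <= G s)
  (u_a_le : forall r, Rabs (u a r) <= m).

(* [G] is continuous only on [I]; clamping extends it continuously to [R], as the FTC needs. *)
Let Gc s := G (clamp a b s).

Let barrier eps s := m + eps * (1 + (s - a)) + RInt Gc a s.

Let continuity_Gc : continuity Gc.
Proof. exact (continuity_clamp_comp I G a b Hab Hsub CG). Qed.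

Lemma barrier_derivative eps c : derivable_pt_lim (barrier eps) c (eps + Gc c).
Proof.
  apply (derivable_pt_lim_plus (fun s => m + eps * (1 + (s - a))) (fun s => RInt Gc a s)).
  - apply is_derive_Reals. auto_derive; [easy | ring].
  - now apply derivable_pt_lim_RInt.
Qed.

Lemma barrier_pos eps s : 0 < eps -> a <= s -> 0 < barrier eps s.
Proof.
  intros Heps Has.
  assert (0 <= m) by (eapply Rle_trans; [apply Rabs_pos | apply (u_a_le 0)]).
  assert (0 <= RInt Gc a s).
  { apply RInt_ge_0; auto using ex_RInt_continuity.
    intros x _. apply G_nonneg, Hsub, clamp_in, Hab. }
  assert (0 < eps * (1 + (s - a))) by (apply Rmult_lt_0_compat; lra).
  unfold barrier. lra.
Qed.

Lemma barrier_left_slope eps c rs sg : a < c <= b -> Rabs sg = 1 ->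
  forall e, 0 < e -> exists d, 0 < d /\ forall y, a <= y < c -> c - y < d ->
    Rabs (((sg * u y rs - barrier eps y) - (sg * u c rs - barrier eps c)) / (y - c)
          - (sg * ut c rs - (eps + Gc c))) < e.
Proof.
  intros Hc Hsg e He.
  destruct (Dut c rs (Hsub c ltac:(lra)) (e / 2) ltac:(lra)) as [d1 [Hd1 Hq1]].
  destruct (barrier_derivative eps c (e / 2) ltac:(lra)) as [d2 Hq2].
  assert (Hd1' := Rmin_l d1 d2). assert (Hd2' := Rmin_r d1 d2).
  exists (Rmin d1 d2). split; [apply Rmin_glb_lt; auto; apply cond_pos |].
  intros y Hy Hcy.
  specialize (Hq1 y (Hsub y ltac:(lra)) ltac:(lra) ltac:(rewrite Rabs_left; lra)).
  specialize (Hq2 (y - c) ltac:(lra) ltac:(rewrite Rabs_left; lra)).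
  replace (c + (y - c)) with y in Hq2 by ring.
  replace (((sg * u y rs - barrier eps y) - (sg * u c rs - barrier eps c)) / (y - c)
           - (sg * ut c rs - (eps + Gc c)))
    with (sg * ((u y rs - u c rs) / (y - c) - ut c rs)
          - ((barrier eps y - barrier eps c) / (y - c) - (eps + Gc c)))
    by (field; lra).
  eapply Rle_lt_trans; [apply Rabs_triang |].
  rewrite Rabs_Ropp, Rabs_mult, Hsg. lra.
Qed.

Lemma barrier_not_touched eps c rs : 0 < eps -> a < c <= b ->
  (forall r, Rabs (u c r) <= Rabs (u c rs)) -> barrier eps c <= Rabs (u c rs) ->
  ~ (forall y, a <= y < c -> Rabs (u y rs) < barrier eps y).
Proof.
  intros Heps Hc Hmax Htouch Hbelow.
  assert (Ic : I c) by (apply Hsub; lra).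
  assert (Hu0 : u c rs <> 0).
  { intros Hu. rewrite Hu, Rabs_R0 in Htouch.
    assert (0 < barrier eps c) by (apply barrier_pos; lra). lra. }
  assert (Hut : Rabs (ut c rs) <= Gc c).
  { unfold Gc. rewrite clamp_id by lra. apply ut_le_G; [lra |].
    exact (derivable_pt_lim_abs_max _ _ _ (Dur c rs Ic) Hmax Hu0). }
  destruct (sign_witness (u c rs)) as [sg [Hsg [Hsg_c Hsg_le]]].
  (* [sg * u - barrier] is negative on [a, c[ and nonnegative at [c], so its left
     derivative at [c] is nonnegative, which contradicts [Hut]. *)
  assert (Hslope : 0 <= sg * ut c rs - (eps + Gc c)).
  { apply (left_limit_of_pos_nonneg
      (fun y => ((sg * u y rs - barrier eps y) - (sg * u c rs - barrier eps c)) / (y - c))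
      _ a c); [lra | | now apply barrier_left_slope].
    intros y Hy. apply Rdiv_neg_neg; [| lra].
    specialize (Hbelow y Hy). specialize (Hsg_le (u y rs)). lra. }
  specialize (Hsg_le (ut c rs)). lra.
Qed.

Lemma abs_below_barrier eps s r : 0 < eps -> a <= s <= b -> Rabs (u s r) < barrier eps s.
Proof.
  intros Heps Hs. apply Rnot_le_lt. intros Hge.
  set (M y := supR (fun r => Rabs (u y r))).
  assert (CuA : cont_on I (fun y r => Rabs (u y r))) by solve_cont_on.
  assert (PuA : periodic_on I (fun y r => Rabs (u y r)))
    by (intros y q Iy; now rewrite Pu).
  assert (HM : forall y r, I y -> Rabs (u y r) <= M y)
    by (intros y q Iy; exact (le_supR I _ CuA PuA y q Iy)).
  assert (Hbarrier_cont : forall y, continuity_pt (barrier eps) y).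
  { intros y. apply derivable_continuous_pt. exists (eps + Gc y). apply barrier_derivative. }
  destruct (first_crossing (fun y => M y - barrier eps y) a s) as [c [Hc [Hcross Hbefore]]].
  - lra.
  - assert (M a <= m) by (apply supR_lub; exact u_a_le).
    unfold barrier. rewrite RInt_point. unfold zero; simpl. nra.
  - specialize (HM s r (Hsub s Hs)). lra.
  - intros y Hy e He.
    destruct (cont_on_supR I _ CuA PuA y 0 (Hsub y ltac:(lra)) (e / 2) ltac:(lra))
      as [d1 [Hd1 HMd]].
    destruct (continuity_pt_eps _ _ (Hbarrier_cont y) (e / 2) ltac:(lra)) as [d2 [Hd2 HBd]].
    exists (Rmin d1 d2). split; [now apply Rmin_glb_lt |]. intros x Hx Hxy.
    specialize (HMd x 0 (Hsub x ltac:(lra)) (Rlt_le_trans _ _ _ Hxy (Rmin_l _ _))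
                  ltac:(rewrite Rminus_diag, Rabs_R0; lra)).
    specialize (HBd x (Rlt_le_trans _ _ _ Hxy (Rmin_r _ _))).
    replace (M x - barrier eps x - (M y - barrier eps y))
      with ((M x - M y) - (barrier eps x - barrier eps y)) by ring.
    eapply Rle_lt_trans; [apply Rabs_triang |]. rewrite Rabs_Ropp. fold (M x) (M y) in HMd. lra.
  - destruct (supR_attained I _ CuA PuA c (Hsub c ltac:(lra))) as [rs [HMc Hrs]].
    fold (M c) in HMc.
    apply (barrier_not_touched eps c rs Heps ltac:(lra) Hrs ltac:(lra)).
    intros y Hy. specialize (Hbefore y Hy). specialize (HM y rs (Hsub y ltac:(lra))). lra.
Qed.

Lemma abs_le_integral_forward r : Rabs (u b r) <= m + RInt G a b.
Proof.
  apply Rle_plus_epsilon. intros eps Heps.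
  assert (Hb := abs_below_barrier (eps / (1 + (b - a))) b r
                  ltac:(apply Rdiv_lt_0_compat; lra) ltac:(lra)).
  assert (HGc : RInt Gc a b = RInt G a b).
  { apply RInt_ext. intros x Hx. rewrite Rmin_left, Rmax_right in Hx by lra.
    unfold Gc. rewrite clamp_id; auto; lra. }
  unfold barrier in Hb. rewrite HGc in Hb.
  replace (eps / (1 + (b - a)) * (1 + (b - a))) with eps in Hb by (field; lra). lra.
Qed.

End Comparison.

Lemma RInt_reflect (G : R -> R) a b : ex_RInt G a b ->
  RInt (fun s => G (- s)) (- a) (- b) = RInt G b a.
Proof.
  intros HG. apply is_RInt_unique. rewrite <- (@opp_RInt_swap R_CompleteNormedModule G a b HG).
  apply (is_RInt_ext (fun s => opp (opp (G (- s))))); [intros; apply opp_opp |].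
  apply (@is_RInt_opp R_NormedModule), (@is_RInt_comp_opp R_NormedModule).
  rewrite !Ropp_involutive.
  now apply (@RInt_correct R_CompleteNormedModule).
Qed.

Lemma cont_on_reflect I g :
  cont_on I g -> cont_on (fun s => I (- s)) (fun s r => g (- s) r).
Proof.
  intros Hg t r It eps Heps. destruct (Hg (- t) r It eps Heps) as [d [Hd Hgd]].
  exists d. split; auto. intros s q Is Hs Hq. apply Hgd; auto.
  replace (- s - - t) with (- (s - t)) by ring. now rewrite Rabs_Ropp.
Qed.

Lemma pderiv_t_reflect I g gt : pderiv_t I g gt ->
  pderiv_t (fun s => I (- s)) (fun s r => g (- s) r) (fun s r => - gt (- s) r).
Proof.
  intros Hg t r It eps Heps. destruct (Hg (- t) r It eps Heps) as [d [Hd Hgd]].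
  exists d. split; auto. intros s Is Hst Hs.
  assert (Hq := Hgd (- s) Is ltac:(lra)
                  ltac:(replace (- s - - t) with (- (s - t)) by ring; now rewrite Rabs_Ropp)).
  replace ((g (- s) r - g (- t) r) / (s - t) - - gt (- t) r)
    with (- ((g (- s) r - g (- t) r) / (- s - - t) - gt (- t) r)) by (field; lra).
  now rewrite Rabs_Ropp.
Qed.

Lemma abs_le_integral_backward I u ut ur G m a b :
  b <= a -> (forall s, b <= s <= a -> I s) ->
  cont_on I u -> periodic_on I u -> pderiv_t I u ut -> pderiv_r I u ur ->
  cont_on I (fun s _ => G s) -> (forall s, I s -> 0 <= G s) ->
  (forall s r, b <= s <= a -> ur s r = 0 -> Rabs (ut s r) <= G s) ->
  (forall r, Rabs (u a r) <= m) ->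
  forall r, Rabs (u b r) <= m + RInt G b a.
Proof.
  intros Hba Hsub Cu Pu Dut Dur CG G_nonneg ut_le_G u_a_le r.
  rewrite <- RInt_reflect by now apply ex_RInt_swap, (ex_RInt_cont_on I).
  replace (u b r) with (u (- - b) r) by now rewrite Ropp_involutive.
  apply (abs_le_integral_forward (fun s => I (- s)) (fun s q => u (- s) q)
           (fun s q => - ut (- s) q) (fun s q => ur (- s) q)).
  - lra.
  - intros s Hs. apply Hsub. lra.
  - now apply cont_on_reflect.
  - intros t q It. now apply Pu.
  - now apply pderiv_t_reflect.
  - intros t q It. now apply Dur.
  - intros t q It. now apply (cont_on_reflect I (fun s _ => G s)).
  - intros s Is. now apply G_nonneg.
  - intros s q Hs Hq. rewrite Rabs_Ropp. apply ut_le_G; auto; lra.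
  - intros q. now rewrite Ropp_involutive.
Qed.

Lemma abs_le_integral I u ut ur G m t0 t :
  is_interval I -> I t0 -> I t ->
  cont_on I u -> periodic_on I u -> pderiv_t I u ut -> pderiv_r I u ur ->
  cont_on I (fun s _ => G s) -> (forall s, I s -> 0 <= G s) ->
  (forall s r, I s -> ur s r = 0 -> Rabs (ut s r) <= G s) ->
  (forall r, Rabs (u t0 r) <= m) ->
  forall r, Rabs (u t r) <= m + RInt G (Rmin t0 t) (Rmax t0 t).
Proof.
  intros HI It0 It Cu Pu Dut Dur CG G_nonneg ut_le_G u_t0_le r.
  destruct (Rle_dec t0 t).
  - assert (Hsub : forall s, t0 <= s <= t -> I s) by (intros s Hs; apply (HI t0 s t); tauto).
    rewrite Rmin_left, Rmax_right by lra.
    apply (abs_le_integral_forward I u ut ur); auto.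
  - assert (Hsub : forall s, t <= s <= t0 -> I s) by (intros s Hs; apply (HI t s t0); tauto).
    rewrite Rmin_right, Rmax_left by lra.
    apply (abs_le_integral_backward I u ut ur); auto. lra.
Qed.

Lemma abs_le_sqrt_sum_sq x y : Rabs x <= sqrt (x ^ 2 + y ^ 2).
Proof. rewrite <- sqrt_Rsqr_abs. apply sqrt_le_1_alt. unfold Rsqr. nra. Qed.

Lemma abs_add_le_sqrt2 x y : Rabs x + Rabs y <= sqrt 2 * sqrt (x ^ 2 + y ^ 2).
Proof.
  assert (Hx := pow2_abs x). assert (Hy := pow2_abs y).
  assert (Hx0 := Rabs_pos x). assert (Hy0 := Rabs_pos y).
  assert (Hx1 := pow2_ge_0 x). assert (Hy1 := pow2_ge_0 y).
  rewrite <- sqrt_mult by lra. rewrite <- (sqrt_Rsqr (Rabs x + Rabs y)) by lra.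
  apply sqrt_le_1_alt. rewrite <- Hx, <- Hy.
  pose proof (Rle_0_sqr (Rabs x - Rabs y)). unfold Rsqr in *. nra.
Qed.

Lemma sqrt_sum_sq_le x y M : Rabs x <= M -> Rabs y <= M -> sqrt (x ^ 2 + y ^ 2) <= sqrt 2 * M.
Proof.
  intros Hx Hy. assert (HM : 0 <= M) by (eapply Rle_trans; [apply Rabs_pos | exact Hx]).
  assert (Hx2 := pow2_abs x). assert (Hy2 := pow2_abs y).
  assert (Hx0 := Rabs_pos x). assert (Hy0 := Rabs_pos y).
  rewrite <- (sqrt_Rsqr M), <- sqrt_mult by (try unfold Rsqr; nra).
  apply sqrt_le_1_alt. unfold Rsqr. nra.
Qed.

Lemma abs_comb3_le c1 c2 c3 w1 w2 w3 v h :
  Rabs c1 <= v -> Rabs c2 <= v -> Rabs c3 <= h ->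
  Rabs (c1 * w1 + c2 * w2 + c3 * w3) <= v * (Rabs w1 + Rabs w2) + h * Rabs w3.
Proof.
  intros H1 H2 H3.
  assert (A1 := Rmult_le_compat_r _ _ _ (Rabs_pos w1) H1).
  assert (A2 := Rmult_le_compat_r _ _ _ (Rabs_pos w2) H2).
  assert (A3 := Rmult_le_compat_r _ _ _ (Rabs_pos w3) H3).
  assert (T1 := Rabs_triang (c1 * w1 + c2 * w2) (c3 * w3)).
  assert (T2 := Rabs_triang (c1 * w1) (c2 * w2)).
  rewrite !Rabs_mult in *. lra.
Qed.

(* With [ur = 0], the equation of [X1] ([sg = 1]) or of [Y1] ([sg = -1], with the roles of
   [X1] and [Y1] exchanged) takes the form of the hypothesis below. *)
Lemma critical_point_solve s lt lr ltr mu mr la mt mtr ut w1 w2 w3 sg : 0 < s ->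
  exp (- mu) * ut =
    ((- 2 * lt - / s) * exp (- mu) - sg * ((mt + mr) * exp (- la))) * w1
    + (- exp (- mu) / s) * w2
    + (- ltr * exp (- mu - la) + sg * ((lr * mt - mt * mr - mtr) * exp (- 2 * la))) * w3 ->
  ut = (- 2 * lt - / s - sg * ((mt + mr) * exp (mu - la))) * w1 + (- / s) * w2
       + (- ltr * exp (- la) + sg * ((lr * mt - mt * mr - mtr) * exp (mu - 2 * la))) * w3.
Proof.
  intros Hs Heq.
  assert (E1 : exp (- mu - la) = exp (- mu) * exp (- la))
    by (unfold Rminus; apply exp_plus).
  assert (E2 : exp (- 2 * la) = exp (- la) * exp (- la))
    by (rewrite <- exp_plus; f_equal; ring).
  assert (E3 : exp (mu - la) = exp mu * exp (- la))
    by (unfold Rminus; apply exp_plus).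
  assert (E4 : exp (mu - 2 * la) = exp mu * exp (- la) * exp (- la))
    by (rewrite <- !exp_plus; f_equal; ring).
  rewrite E1, E2, (exp_Ropp mu) in Heq. rewrite E3, E4.
  assert (HE := exp_pos mu).
  apply (Rmult_eq_reg_l (/ exp mu)); [| apply Rinv_neq_0_compat; lra].
  rewrite Heq. field. lra.
Qed.

Lemma critical_point_bound s lt lr ltr mu mr la mt mtr ut w1 w2 w3 sg :
  0 < s -> Rabs sg = 1 ->
  exp (- mu) * ut =
    ((- 2 * lt - / s) * exp (- mu) - sg * ((mt + mr) * exp (- la))) * w1
    + (- exp (- mu) / s) * w2
    + (- ltr * exp (- mu - la) + sg * ((lr * mt - mt * mr - mtr) * exp (- 2 * la))) * w3 ->
  Rabs ut <=
    (2 / s + 2 * Rabs lt + (Rabs mt + Rabs mr) * exp (mu - la)) * (Rabs w1 + Rabs w2)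
    + (Rabs ltr * exp (- la)
       + (Rabs mr * Rabs mt + Rabs lr * Rabs mt + Rabs mtr) * exp (mu - 2 * la)) * Rabs w3.
Proof.
  intros Hs Hsg Heq.
  rewrite (critical_point_solve s lt lr ltr mu mr la mt mtr ut w1 w2 w3 sg Hs Heq).
  assert (HE1 := exp_pos (mu - la)). assert (HE2 := exp_pos (- la)).
  assert (HE3 := exp_pos (mu - 2 * la)).
  set (E1 := exp (mu - la)) in *. set (E2 := exp (- la)) in *. set (E3 := exp (mu - 2 * la)) in *.
  assert (Hs' : 0 < / s) by now apply Rinv_0_lt_compat.
  assert (Hmt := Rabs_pos mt). assert (Hmr := Rabs_pos mr). assert (Hlt := Rabs_pos lt).
  apply abs_comb3_le.
  - unfold Rminus.
    eapply Rle_trans; [apply Rabs_triang |].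
    eapply Rle_trans; [apply Rplus_le_compat_r, Rabs_triang |].
    rewrite !Rabs_Ropp, !Rabs_mult, Hsg, (Rabs_pos_eq E1), (Rabs_pos_eq (/ s)), Rabs_left
      by lra.
    assert (Rabs (mt + mr) * E1 <= (Rabs mt + Rabs mr) * E1)
      by (apply Rmult_le_compat_r; [lra | apply Rabs_triang]).
    unfold Rdiv. lra.
  - rewrite Rabs_Ropp, Rabs_pos_eq by lra. unfold Rdiv. nra.
  - eapply Rle_trans; [apply Rabs_triang |].
    rewrite !Rabs_mult, Rabs_Ropp, Hsg, Rmult_1_l, (Rabs_pos_eq E2), (Rabs_pos_eq E3) by lra.
    apply Rplus_le_compat_l, Rmult_le_compat_r; [lra |].
    unfold Rminus. eapply Rle_trans; [apply Rabs_triang |].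
    eapply Rle_trans; [apply Rplus_le_compat_r, Rabs_triang |].
    rewrite !Rabs_Ropp, !Rabs_mult. lra.
Qed.

Lemma derivable_pt_lim_exp_opp_mul g g' f f' r :
  derivable_pt_lim g r g' -> derivable_pt_lim f r f' ->
  derivable_pt_lim (fun q => exp (- g q) * f q) r (exp (- g r) * (f' - g' * f r)).
Proof.
  intros Hg Hf.
  assert (He := derivable_pt_lim_comp _ exp r _ _ (derivable_pt_lim_opp g r g' Hg)
                  (derivable_pt_lim_exp (- g r))).
  replace (exp (- g r) * (f' - g' * f r)) with (exp (- g r) * - g' * f r + exp (- g r) * f')
    by ring.
  exact (derivable_pt_lim_mult _ _ r _ _ He Hf).
Qed.

Lemma abs_weighted_combination_le sg P Q x1 y1 z1 x2 y2 z2 :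
  Rabs sg = 1 -> 0 <= P -> 0 <= Q ->
  Rabs (P * (x1 - y1 * z1) + sg * (Q * (x2 - y2 * z2))) <=
  (Rabs x1 + Rabs y1 * Rabs z1) * P + (Rabs x2 + Rabs y2 * Rabs z2) * Q.
Proof.
  intros Hsg HP HQ.
  assert (T1 := Rabs_triang x1 (- (y1 * z1))). assert (T2 := Rabs_triang x2 (- (y2 * z2))).
  rewrite Rabs_Ropp, Rabs_mult in T1, T2.
  eapply Rle_trans; [apply Rabs_triang |].
  rewrite !Rabs_mult, Hsg, Rmult_1_l, (Rabs_pos_eq P), (Rabs_pos_eq Q) by lra.
  unfold Rminus. apply Rplus_le_compat; rewrite Rmult_comm; apply Rmult_le_compat_r; lra.
Qed.

Section Proposition_2_5.

Variables (I : R -> Prop)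
  (lam lamt lamr lamtt lamtr mu mut mur mut_ mut_t mut_r : R -> R -> R)
  (psi dpsi phi dphi ddphi : R -> R)
  (X Xt Xr Y Yt Yr X1 X1t X1r Y1 Y1t Y1r : R -> R -> R).

Hypotheses (HI : is_interval I) (I1 : I 1) (Ipos : forall t, I t -> 0 < t)
  (Clam : C1_on I lam lamt lamr) (Clamt : C1_on I lamt lamtt lamtr)
  (Cmu : C1_on I mu mut mur) (Cmut : C1_on I mut_ mut_t mut_r)
  (Plam : periodic2 lam) (Pmu : periodic2 mu) (Pmut : periodic2 mut_)
  (Dpsi : forall r, derivable_pt_lim psi r (dpsi r)) (Cdpsi : continuity dpsi)
  (Dphi : forall r, derivable_pt_lim phi r (dphi r))
  (Ddphi : forall r, derivable_pt_lim dphi r (ddphi r)) (Cddphi : continuity ddphi)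
  (Ppsi : periodic1 psi) (Pphi : periodic1 phi)
  (CX : C1_on I X Xt Xr) (CY : C1_on I Y Yt Yr) (PX : periodic2 X) (PY : periodic2 Y)
  (X_init : forall r, X 1 r = exp (- mu 1 r) * psi r - exp (- lam 1 r) * dphi r)
  (Y_init : forall r, Y 1 r = exp (- mu 1 r) * psi r + exp (- lam 1 r) * dphi r)
  (CX1 : C1_on I X1 X1t X1r) (CY1 : C1_on I Y1 Y1t Y1r)
  (PX1 : periodic2 X1) (PY1 : periodic2 Y1)
  (X1_eq : forall t r, I t ->
     exp (- mu t r) * X1t t r + exp (- lam t r) * X1r t r =
     ((- 2 * lamt t r - / t) * exp (- mu t r)
        - (mut_ t r + mur t r) * exp (- lam t r)) * X1 t r
     + (- exp (- mu t r) / t) * Y1 t r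
     + (- lamtr t r * exp (- mu t r - lam t r)
        + (lamr t r * mut_ t r - mut_ t r * mur t r - mut_r t r)
          * exp (- 2 * lam t r)) * X t r)
  (Y1_eq : forall t r, I t ->
     exp (- mu t r) * Y1t t r - exp (- lam t r) * Y1r t r =
     (- exp (- mu t r) / t) * X1 t r
     + ((- 2 * lamt t r - / t) * exp (- mu t r)
        + (mut_ t r + mur t r) * exp (- lam t r)) * Y1 t r
     + (- lamtr t r * exp (- mu t r - lam t r)
        - (lamr t r * mut_ t r - mut_ t r * mur t r - mut_r t r)
          * exp (- 2 * lam t r)) * Y t r)
  (X1_init : forall r, X1 1 r = exp (- lam 1 r) * Xr 1 r)
  (Y1_init : forall r, Y1 1 r = exp (- lam 1 r) * Yr 1 r).

Let a0_at r := (Rabs (dpsi r) + Rabs (mur 1 r) * Rabs (psi r)) * exp (- mu 1 r - lam 1 r)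
  + (Rabs (ddphi r) + Rabs (lamr 1 r) * Rabs (dphi r)) * exp (- 2 * lam 1 r).

Let v_at t r := 2 / t + 2 * Rabs (lamt t r)
  + (Rabs (mut_ t r) + Rabs (mur t r)) * exp (mu t r - lam t r).

Let h_at t r := Rabs (lamtr t r) * exp (- lam t r)
  + (Rabs (mur t r) * Rabs (mut_ t r) + Rabs (lamr t r) * Rabs (mut_ t r)
     + Rabs (mut_r t r)) * exp (mu t r - 2 * lam t r).

Let K t := supR (fun r => sqrt (X t r ^ 2 + Y t r ^ 2)).
Let A t := supR (fun r => sqrt (X1 t r ^ 2 + Y1 t r ^ 2)).
Let v t := supR (v_at t).
Let h t := supR (h_at t).
Let integrand s := v s * A s + h s * K s.

Lemma initial_data_bound u ur sg : Rabs sg = 1 -> pderiv_r I u ur ->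
  (forall r, u 1 r = exp (- mu 1 r) * psi r + sg * (exp (- lam 1 r) * dphi r)) ->
  forall r, Rabs (exp (- lam 1 r) * ur 1 r) <= a0_at r.
Proof.
  intros Hsg Dur Hu r.
  destruct Clam as [_ [_ [_ [_ Dlamr]]]]. destruct Cmu as [_ [_ [_ [_ Dmur]]]].
  assert (Hur : ur 1 r = exp (- mu 1 r) * (dpsi r - mur 1 r * psi r)
                         + sg * (exp (- lam 1 r) * (ddphi r - lamr 1 r * dphi r))).
  { apply (uniqueness_limite (u 1) r); [now apply Dur |].
    apply is_derive_Reals, (is_derive_ext (fun q => exp (- mu 1 q) * psi q
                                          + sg * (exp (- lam 1 q) * dphi q))).
    { intros q. now rewrite Hu. }
    apply is_derive_Reals, derivable_pt_lim_plus;
      [| apply derivable_pt_lim_scal]; apply derivable_pt_lim_exp_opp_mul; auto. }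
  assert (E1 : exp (- mu 1 r - lam 1 r) = exp (- lam 1 r) * exp (- mu 1 r))
    by (rewrite <- exp_plus; f_equal; ring).
  assert (E2 : exp (- 2 * lam 1 r) = exp (- lam 1 r) * exp (- lam 1 r))
    by (rewrite <- exp_plus; f_equal; ring).
  unfold a0_at. rewrite E1, E2, Hur.
  replace (exp (- lam 1 r) * (exp (- mu 1 r) * (dpsi r - mur 1 r * psi r)
            + sg * (exp (- lam 1 r) * (ddphi r - lamr 1 r * dphi r))))
    with (exp (- lam 1 r) * exp (- mu 1 r) * (dpsi r - mur 1 r * psi r)
          + sg * (exp (- lam 1 r) * exp (- lam 1 r) * (ddphi r - lamr 1 r * dphi r))) by ring.
  apply abs_weighted_combination_le; auto; left; apply Rmult_lt_0_compat; apply exp_pos.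
Qed.

Ltac unpack_C1 :=
  destruct Clam as [Clam0 [Clamt0 [Clamr0 [Dlamt Dlamr]]]];
  destruct Clamt as [_ [_ [Clamtr0 [_ Dlamtr]]]];
  destruct Cmu as [Cmu0 [_ [Cmur0 [_ Dmur]]]];
  destruct Cmut as [Cmut0 [_ [Cmutr0 [_ Dmutr]]]];
  destruct CX as [CX0 [_ [_ [_ DXr]]]]; destruct CY as [CY0 [_ [_ [_ DYr]]]];
  destruct CX1 as [CX10 [_ [_ [DX1t DX1r]]]]; destruct CY1 as [CY10 [_ [_ [DY1t DY1r]]]].

Let a0_le_sup r : a0_at r <= supR a0_at.
Proof.
  unpack_C1.
  assert (Cpsi : continuity psi).
  { intros q. apply derivable_continuous_pt. exists (dpsi q). apply Dpsi. }
  assert (Cdphi : continuity dphi).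
  { intros q. apply derivable_continuous_pt. exists (ddphi q). apply Ddphi. }
  assert (Ca0 : cont_on I (fun _ r => a0_at r)) by (unfold a0_at; solve_cont_on).
  assert (Pa0 : periodic_on I (fun _ r => a0_at r)).
  { intros t q _. unfold a0_at.
    assert (Pdphi := deriv_periodic1 phi dphi Pphi Dphi).
    rewrite (deriv_periodic1 psi dpsi Ppsi Dpsi), (deriv_periodic1 dphi ddphi Pdphi Ddphi),
      Ppsi, Pdphi, Pmu, Plam,
      (pderiv_r_periodic I mu mur (periodic2_on I mu Pmu) Dmur),
      (pderiv_r_periodic I lam lamr (periodic2_on I lam Plam) Dlamr); auto. }
  exact (le_supR I _ Ca0 Pa0 1 r I1).
Qed.

Lemma X1_init_le r : Rabs (X1 1 r) <= supR a0_at.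
Proof.
  destruct CX as [_ [_ [_ [_ DXr]]]].
  rewrite X1_init. eapply Rle_trans; [| apply a0_le_sup].
  apply (initial_data_bound X Xr (-1)); auto.
  - rewrite Rabs_left; lra.
  - intros q. rewrite X_init. ring.
Qed.

Lemma Y1_init_le r : Rabs (Y1 1 r) <= supR a0_at.
Proof.
  destruct CY as [_ [_ [_ [_ DYr]]]].
  rewrite Y1_init. eapply Rle_trans; [| apply a0_le_sup].
  apply (initial_data_bound Y Yr 1); auto.
  - apply Rabs_R1.
  - intros q. rewrite Y_init. ring.
Qed.

Lemma v_at_nonneg t r : I t -> 0 <= v_at t r.
Proof.
  intros It. unfold v_at.
  assert (0 < 2 / t) by (apply Rdiv_lt_0_compat; [lra | now apply Ipos]).
  assert (E := exp_pos (mu t r - lam t r)).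
  pose proof (Rabs_pos (lamt t r)). pose proof (Rabs_pos (mut_ t r)).
  pose proof (Rabs_pos (mur t r)).
  nra.
Qed.

Lemma h_at_nonneg t r : 0 <= h_at t r.
Proof.
  unfold h_at.
  assert (E1 := exp_pos (- lam t r)). assert (E2 := exp_pos (mu t r - 2 * lam t r)).
  pose proof (Rabs_pos (lamtr t r)). pose proof (Rabs_pos (mur t r)).
  pose proof (Rabs_pos (mut_ t r)). pose proof (Rabs_pos (lamr t r)).
  pose proof (Rabs_pos (mut_r t r)).
  assert (0 <= Rabs (mur t r) * Rabs (mut_ t r)) by nra.
  assert (0 <= Rabs (lamr t r) * Rabs (mut_ t r)) by nra.
  nra.
Qed.

Lemma integrand_nonneg s : I s -> 0 <= integrand s.
Proof.
  intros Is. unfold integrand, v, h, A, K.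
  assert (0 <= supR (v_at s)) by (apply supR_nonneg; intros; now apply v_at_nonneg).
  assert (0 <= supR (h_at s)) by (apply supR_nonneg; intros; apply h_at_nonneg).
  assert (0 <= supR (fun r => sqrt (X1 s r ^ 2 + Y1 s r ^ 2)))
    by (apply supR_nonneg; intros; apply sqrt_pos).
  assert (0 <= supR (fun r => sqrt (X s r ^ 2 + Y s r ^ 2)))
    by (apply supR_nonneg; intros; apply sqrt_pos).
  nra.
Qed.

Lemma A_le t M : (forall r, Rabs (X1 t r) <= M) -> (forall r, Rabs (Y1 t r) <= M) ->
  A t <= sqrt 2 * M.
Proof. intros HX HY. apply supR_lub. intros r. now apply sqrt_sum_sq_le. Qed.

Section Nondegenerate.

(* Needed for the periodicity of [lamt]: [pderiv_t] says nothing when [I] is a point. *)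
Hypothesis NI : no_isolated_points I.

Let P_A_at : periodic_on I (fun t r => sqrt (X1 t r ^ 2 + Y1 t r ^ 2)).
Proof. intros t r _. now rewrite PX1, PY1. Qed.

Let P_K_at : periodic_on I (fun t r => sqrt (X t r ^ 2 + Y t r ^ 2)).
Proof. intros t r _. now rewrite PX, PY. Qed.

Let P_coefficients : periodic_on I v_at /\ periodic_on I h_at.
Proof.
  unpack_C1.
  assert (Plamt := pderiv_t_periodic I lam lamt NI (periodic2_on I lam Plam) Dlamt).
  assert (Plamtr := pderiv_r_periodic I lamt lamtr Plamt Dlamtr).
  assert (Plamr := pderiv_r_periodic I lam lamr (periodic2_on I lam Plam) Dlamr).
  assert (Pmur := pderiv_r_periodic I mu mur (periodic2_on I mu Pmu) Dmur).
  assert (Pmutr := pderiv_r_periodic I mut_ mut_r (periodic2_on I mut_ Pmut) Dmutr).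
  split; intros t r It; unfold v_at, h_at.
  - rewrite Plamt, Pmut, Pmur, Pmu, Plam; auto.
  - rewrite Plamtr, Plam, Pmur, Pmut, Plamr, Pmutr, Pmu; auto.
Qed.

Let C_coefficients : cont_on I v_at /\ cont_on I h_at.
Proof. unpack_C1. split; [unfold v_at | unfold h_at]; solve_cont_on. Qed.

Let C_norms : cont_on I (fun t r => sqrt (X1 t r ^ 2 + Y1 t r ^ 2))
              /\ cont_on I (fun t r => sqrt (X t r ^ 2 + Y t r ^ 2)).
Proof. unpack_C1. split; solve_cont_on. Qed.

Lemma cont_on_integrand : cont_on I (fun s _ => integrand s).
Proof.
  destruct P_coefficients, C_coefficients, C_norms.
  unfold integrand, v, h, A, K.
  apply cont_on_plus; apply cont_on_mult; now apply cont_on_supR.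
Qed.

Lemma critical_le_integrand s r ut w1 w2 w3 : I s ->
  Rabs ut <= v_at s r * (Rabs w1 + Rabs w2) + h_at s r * Rabs w3 ->
  Rabs w1 + Rabs w2 <= sqrt 2 * A s -> Rabs w3 <= K s ->
  Rabs ut <= 3 / sqrt 2 * integrand s.
Proof.
  intros Is Hut Hw12 Hw3.
  destruct P_coefficients as [Pv Ph]. destruct C_coefficients as [Cv Ch].
  assert (Hv := le_supR I v_at Cv Pv s r Is). assert (Hh := le_supR I h_at Ch Ph s r Is).
  fold (v s) in Hv. fold (h s) in Hh.
  assert (Hv0 := v_at_nonneg s r Is). assert (Hh0 := h_at_nonneg s r).
  assert (HF := integrand_nonneg s Is). unfold integrand in *.
  assert (Hw12' : 0 <= Rabs w1 + Rabs w2)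
    by (pose proof (Rabs_pos w1); pose proof (Rabs_pos w2); lra).
  assert (Hw3' := Rabs_pos w3).
  assert (H1 : v_at s r * (Rabs w1 + Rabs w2) <= v s * (sqrt 2 * A s))
    by (apply Rmult_le_compat; lra).
  assert (H2 : h_at s r * Rabs w3 <= h s * K s) by (apply Rmult_le_compat; lra).
  assert (0 <= A s) by (apply supR_nonneg; intros; apply sqrt_pos).
  assert (HvA : 0 <= v s * A s) by nra. assert (HhK : 0 <= h s * K s) by nra.
  replace (v s * (sqrt 2 * A s)) with (sqrt 2 * (v s * A s)) in H1 by ring.
  assert (Hs2 := sqrt_sqrt 2 ltac:(lra)). assert (Hs0 := Rlt_sqrt2_0).
  assert (Hc : 3 / sqrt 2 * sqrt 2 = 3) by (field; lra).
  assert (Hc1 : sqrt 2 <= 3 / sqrt 2) by nra.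
  assert (Hc2 : 1 <= 3 / sqrt 2) by nra.
  nra.
Qed.

Lemma X1t_critical_le s r : I s -> X1r s r = 0 -> Rabs (X1t s r) <= 3 / sqrt 2 * integrand s.
Proof.
  intros Is Hr. apply (critical_le_integrand s r _ (X1 s r) (Y1 s r) (X s r) Is).
  - apply (critical_point_bound s _ _ _ _ _ _ _ _ _ _ _ _ 1 (Ipos s Is) Rabs_R1).
    assert (E := X1_eq s r Is). rewrite Hr, Rmult_0_r, Rplus_0_r in E. rewrite E. ring.
  - eapply Rle_trans; [apply abs_add_le_sqrt2 |]. apply Rmult_le_compat_l; [apply sqrt_pos |].
    exact (le_supR I _ (proj1 C_norms) P_A_at s r Is).
  - eapply Rle_trans; [apply abs_le_sqrt_sum_sq |].
    exact (le_supR I _ (proj2 C_norms) P_K_at s r Is).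
Qed.

Lemma Y1t_critical_le s r : I s -> Y1r s r = 0 -> Rabs (Y1t s r) <= 3 / sqrt 2 * integrand s.
Proof.
  intros Is Hr. apply (critical_le_integrand s r _ (Y1 s r) (X1 s r) (Y s r) Is).
  - apply (critical_point_bound s _ _ _ _ _ _ _ _ _ _ _ _ (-1) (Ipos s Is)).
    + rewrite Rabs_left; lra.
    + assert (E := Y1_eq s r Is). rewrite Hr, Rmult_0_r, Rminus_0_r in E. rewrite E. ring.
  - rewrite Rplus_comm. eapply Rle_trans; [apply abs_add_le_sqrt2 |].
    apply Rmult_le_compat_l; [apply sqrt_pos |].
    exact (le_supR I _ (proj1 C_norms) P_A_at s r Is).
  - eapply Rle_trans; [apply (abs_le_sqrt_sum_sq _ (X s r)) |]. rewrite Rplus_comm.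
    exact (le_supR I _ (proj2 C_norms) P_K_at s r Is).
Qed.

End Nondegenerate.

Lemma A_estimate t : I t -> A t <= 2 * supR a0_at + 3 * RInt integrand (Rmin 1 t) (Rmax 1 t).
Proof.
  intros It.
  assert (HS : 0 <= supR a0_at) by (eapply Rle_trans; [apply Rabs_pos | apply (X1_init_le 0)]).
  assert (Hs2 := sqrt_sqrt 2 ltac:(lra)). assert (Hs0 := Rlt_sqrt2_0).
  destruct (Req_dec t 1) as [-> | Ht].
  - rewrite Rmin_left, Rmax_left, RInt_point by lra. unfold zero; simpl.
    assert (A 1 <= sqrt 2 * supR a0_at) by (apply A_le; [apply X1_init_le | apply Y1_init_le]).
    nra.
  - assert (NI := is_interval_no_isolated_points I 1 t HI I1 It (not_eq_sym Ht)).
    unpack_C1.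
    set (G s := 3 / sqrt 2 * integrand s).
    assert (CG : cont_on I (fun s _ => G s))
      by (apply cont_on_mult; [apply cont_on_const | now apply cont_on_integrand]).
    assert (G_nonneg : forall s, I s -> 0 <= G s).
    { intros s Is. apply Rmult_le_pos; [| now apply integrand_nonneg].
      apply Rdiv_le_0_compat; lra. }
    assert (Hsub : forall s, Rmin 1 t <= s <= Rmax 1 t -> I s).
    { intros s Hs. apply (HI (Rmin 1 t) s (Rmax 1 t)); try tauto;
        [unfold Rmin | unfold Rmax]; destruct Rle_dec; auto. }
    assert (HG : RInt G (Rmin 1 t) (Rmax 1 t) = 3 / sqrt 2 * RInt integrand (Rmin 1 t) (Rmax 1 t)).
    { apply (@RInt_scal R_CompleteNormedModule integrand).
      apply (ex_RInt_cont_on I); [apply Rmin_Rmax | exact Hsub | now apply cont_on_integrand]. }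
    assert (HA : A t <= sqrt 2 * (supR a0_at + RInt G (Rmin 1 t) (Rmax 1 t))).
    { apply A_le.
      - apply (abs_le_integral I X1 X1t X1r G); auto using periodic2_on, X1_init_le.
        intros s r Is Hr. now apply X1t_critical_le.
      - apply (abs_le_integral I Y1 Y1t Y1r G); auto using periodic2_on, Y1_init_le.
        intros s r Is Hr. now apply Y1t_critical_le. }
    assert (Hc : sqrt 2 * (3 / sqrt 2) = 3) by (field; lra).
    rewrite HG, Rmult_plus_distr_l, <- Rmult_assoc, Hc in HA. nra.
Qed.

End Proposition_2_5.

Theorem proposition2p5
  (I : R -> Prop)
  (lam lamt lamr lamtt lamtr mu mut mur mut_ mut_t mut_r : R -> R -> R)
  (psi dpsi phi dphi ddphi : R -> R)
  (X Xt Xr Y Yt Yr X1 X1t X1r Y1 Y1t Y1r : R -> R -> R) :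
  is_interval I -> I 1 -> (forall t, I t -> 0 < t) ->
  (* lambda, mu, mu tilde in C^1(I x R), 1-periodic in r; lambda dot in C^1 *)
  C1_on I lam lamt lamr -> C1_on I lamt lamtt lamtr ->
  C1_on I mu mut mur -> C1_on I mut_ mut_t mut_r ->
  periodic2 lam -> periodic2 mu -> periodic2 mut_ ->
  (* psi in C^1(R), phi in C^2(R), 1-periodic *)
  (forall r, derivable_pt_lim psi r (dpsi r)) -> continuity dpsi ->
  (forall r, derivable_pt_lim phi r (dphi r)) ->
  (forall r, derivable_pt_lim dphi r (ddphi r)) -> continuity ddphi ->
  periodic1 psi -> periodic1 phi ->
  (* X, Y *)
  C1_on I X Xt Xr -> C1_on I Y Yt Yr -> periodic2 X -> periodic2 Y ->
  (forall t r, I t ->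
     exp (- mu t r) * Xt t r + exp (- lam t r) * Xr t r =
     ((- lamt t r - / t) * exp (- mu t r) - mut_ t r * exp (- lam t r)) * X t r
     + (- exp (- mu t r) / t) * Y t r) ->
  (forall t r, I t ->
     exp (- mu t r) * Yt t r - exp (- lam t r) * Yr t r =
     (- exp (- mu t r) / t) * X t r
     + ((- lamt t r - / t) * exp (- mu t r) + mut_ t r * exp (- lam t r)) * Y t r) ->
  (forall r, X 1 r = exp (- mu 1 r) * psi r - exp (- lam 1 r) * dphi r) ->
  (forall r, Y 1 r = exp (- mu 1 r) * psi r + exp (- lam 1 r) * dphi r) ->
  (* X1, Y1 *)
  C1_on I X1 X1t X1r -> C1_on I Y1 Y1t Y1r -> periodic2 X1 -> periodic2 Y1 ->
  (forall t r, I t ->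
     exp (- mu t r) * X1t t r + exp (- lam t r) * X1r t r =
     ((- 2 * lamt t r - / t) * exp (- mu t r)
        - (mut_ t r + mur t r) * exp (- lam t r)) * X1 t r
     + (- exp (- mu t r) / t) * Y1 t r
     + (- lamtr t r * exp (- mu t r - lam t r)
        + (lamr t r * mut_ t r - mut_ t r * mur t r - mut_r t r)
          * exp (- 2 * lam t r)) * X t r) ->
  (forall t r, I t ->
     exp (- mu t r) * Y1t t r - exp (- lam t r) * Y1r t r =
     (- exp (- mu t r) / t) * X1 t r
     + ((- 2 * lamt t r - / t) * exp (- mu t r)
        + (mut_ t r + mur t r) * exp (- lam t r)) * Y1 t r
     + (- lamtr t r * exp (- mu t r - lam t r)
        - (lamr t r * mut_ t r - mut_ t r * mur t r - mut_r t r)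
          * exp (- 2 * lam t r)) * Y t r) ->
  (forall r, X1 1 r = exp (- lam 1 r) * Xr 1 r) ->
  (forall r, Y1 1 r = exp (- lam 1 r) * Yr 1 r) ->
  let K := fun t => supR (fun r => sqrt (X t r ^ 2 + Y t r ^ 2)) in
  let A0 := 2 * supR (fun r =>
      (Rabs (dpsi r) + Rabs (mur 1 r) * Rabs (psi r)) * exp (- mu 1 r - lam 1 r)
      + (Rabs (ddphi r) + Rabs (lamr 1 r) * Rabs (dphi r)) * exp (- 2 * lam 1 r)) in
  let A := fun t => supR (fun r => sqrt (X1 t r ^ 2 + Y1 t r ^ 2)) in
  let v := fun t => supR (fun r =>
      2 / t + 2 * Rabs (lamt t r)
      + (Rabs (mut_ t r) + Rabs (mur t r)) * exp (mu t r - lam t r)) in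
  let h := fun t => supR (fun r =>
      Rabs (lamtr t r) * exp (- lam t r)
      + (Rabs (mur t r) * Rabs (mut_ t r) + Rabs (lamr t r) * Rabs (mut_ t r)
         + Rabs (mut_r t r)) * exp (mu t r - 2 * lam t r)) in
  (forall t, I t -> t <= 1 ->
     A t <= A0 + 3 * RInt (fun s => v s * A s + h s * K s) t 1) /\
  (forall t, I t -> 1 <= t ->
     A t <= A0 + 3 * RInt (fun s => v s * A s + h s * K s) 1 t).
Proof.
  intros HI I1 Ipos Clam Clamt Cmu Cmut Plam Pmu Pmut Dpsi Cdpsi Dphi Ddphi Cddphi
    Ppsi Pphi CX CY PX PY _ _ X_init Y_init CX1 CY1 PX1 PY1 X1_eq Y1_eq X1_init Y1_init
    K A0 A v h.
  assert (Hest : forall t, I t ->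
            A t <= A0 + 3 * RInt (fun s => v s * A s + h s * K s) (Rmin 1 t) (Rmax 1 t))
    by (intros t It; eapply A_estimate; eauto).
  split; intros t It Ht; specialize (Hest t It).
  - now rewrite Rmin_right, Rmax_left in Hest by lra.
  - now rewrite Rmin_left, Rmax_right in Hest by lra.
Qed.
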